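(* Let $(S,<_S)$ be a well-founded order which does not embed $R_{2,2}$. The following are equivalent: (1) $(S,<_S)$ does not embed $S_{\omega,2}$; (2) $(D(S),\subsetneq)$ is well-founded; (3) $(\mathrm{CU}(S),\subsetneq)$ is well-founded.
   Context: An order $(S,<_S)$ is a set with a strict partial order (antisymmetric, transitive). An embedding of $(S,<_S)$ into $(R,<_R)$ is an injection $\pi$ with $x<_S y\iff\pi(x)<_R\pi(y)$. $R_{2,2}$ is the order on $\{x_0,x_1,y_0,y_1\}$ whose only relations are $x_0<y_0$, $x_1<y_1$. $S_{\omega,2}$ is the order on $\{x_n\}_{n<\omega}\uplus\{y_n\}_{n<\omega}$ whose relations are exactly $x_m<y_n$ for $m\geq n$. For $x\in S$: $d(x)=\{z\mid z<_S x\}$, $u(x)=\{z\mid x<_S z\}$, $\mathrm{cu}(x)=S\setminus u(x)$; $D(S)=\{d(x)\mid x\in S\}$ and $\mathrm{CU}(S)=\{\mathrm{cu}(x)\mid x\in S\}$. *)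

From Stdlib Require Import Arith.

Definition strict_order {S : Type} (lt : S -> S -> Prop) : Prop :=
  (forall x, ~ lt x x) /\ (forall x y z, lt x y -> lt y z -> lt x z).

Definition embeds {S R : Type} (ltS : S -> S -> Prop) (ltR : R -> R -> Prop) : Prop :=
  exists pi : S -> R,
    (forall x y, pi x = pi y -> x = y) /\
    (forall x y, ltS x y <-> ltR (pi x) (pi y)).

Inductive R22 : Type := x0 | x1 | y0 | y1.
Definition R22_lt (a b : R22) : Prop :=
  (a = x0 /\ b = y0) \/ (a = x1 /\ b = y1).

(* S_{omega,2} on {x_n} + {y_n}: x_n = inl n, y_n = inr n;
   relations exactly x_m < y_n for m >= n. *)
Definition Somega2_lt (a b : nat + nat) : Prop :=
  match a, b with
  | inl m, inr n => n <= m
  | _, _ => False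
  end.

Section Sets.
Context {S : Type} (lt : S -> S -> Prop).
Definition dset (x : S) : S -> Prop := fun z => lt z x.
Definition uset (x : S) : S -> Prop := fun z => lt x z.
Definition cuset (x : S) : S -> Prop := fun z => ~ lt x z.
End Sets.

Definition DS {S : Type} (lt : S -> S -> Prop) : Type :=
  { A : S -> Prop | exists x, A = dset lt x }.
Definition CUS {S : Type} (lt : S -> S -> Prop) : Type :=
  { A : S -> Prop | exists x, A = cuset lt x }.

Definition subset {S : Type} (A B : S -> Prop) : Prop := forall z, A z -> B z.
Definition psubset {S : Type} (A B : S -> Prop) : Prop := subset A B /\ ~ subset B A.

Definition DS_lt {S : Type} (lt : S -> S -> Prop) (A B : DS lt) : Prop :=
  psubset (proj1_sig A) (proj1_sig B).
Definition CUS_lt {S : Type} (lt : S -> S -> Prop) (A B : CUS lt) : Prop :=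
  psubset (proj1_sig A) (proj1_sig B).

(* Both failures of well-foundedness produce a copy of S_{omega,2}: a strictly
   decreasing chain d(z_0) ⊋ d(z_1) ⊋ ... gives points w_n in d(z_n) \ d(z_{n+1}),
   and (w_n, z_n) realises the pattern "w_m < z_n iff n <= m"; in a well-founded
   order a Ramsey-style thinning turns any realisation of this pattern into an
   embedding.  Symmetrically for the sets cu(y_n).  Conversely, if the x_n, y_n
   form a copy of S_{omega,2}, the absence of R_{2,2} forces d(y_{n+1}) ⊆ d(y_n)
   and u(x_n) ⊆ u(x_{n+1}), with x_n resp. y_{n+1} witnessing strictness. *)

From Stdlib Require Import Arith Lia Classical IndefiniteDescription.

Lemma descending_chain_not_wf {A : Type} (R : A -> A -> Prop) (f : nat -> A) :
  (forall n, R (f (S n)) (f n)) -> ~ well_founded R.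
Proof.
  intros Hf W.
  assert (H : forall x, Acc R x -> forall n, x <> f n).
  { intros x Ha; induction Ha as [x _ IH]; intros n ->.
    exact (IH (f (S n)) (Hf n) (S n) eq_refl). }
  exact (H (f 0) (W _) 0 eq_refl).
Qed.

Lemma not_wf_descending_chain {A : Type} (R : A -> A -> Prop) :
  ~ well_founded R -> exists f : nat -> A, forall n, R (f (S n)) (f n).
Proof.
  intros HW.
  destruct (not_all_ex_not _ _ HW) as [x0 Hx0].
  assert (Hstep : forall x : {x | ~ Acc R x},
             exists y : {y | ~ Acc R y}, R (proj1_sig y) (proj1_sig x)).
  { intros [x Hx]. apply NNPP; intro Hn. apply Hx. constructor. intros y Hy.
    apply NNPP; intro Hy'. apply Hn. exists (exist _ y Hy'). exact Hy. }
  destruct (functional_choice _ Hstep) as [next Hnext].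
  exists (fun n => proj1_sig (Nat.iter n next (exist _ x0 Hx0))).
  intro n. apply Hnext.
Qed.

Lemma wf_has_minimal {T : Type} (lt : T -> T -> Prop) (P : T -> Prop) :
  well_founded lt -> (exists x, P x) ->
  exists x, P x /\ forall y, P y -> ~ lt y x.
Proof.
  intros W [x Px]. apply NNPP; intro Hn.
  assert (H : forall z, Acc lt z -> ~ P z).
  { intros z Ha; induction Ha as [z _ IH]; intro Pz.
    apply Hn. exists z; split; [exact Pz|].
    intros y Py Hy. exact (IH y Hy Py). }
  exact (H x (W x) Px).
Qed.

Lemma strictly_increasing_le_iff (g : nat -> nat) :
  (forall i j, i < j -> g i < g j) -> forall n m, n <= m <-> g n <= g m.
Proof.
  intros Hg n m; split; intro H.
  - destruct (Nat.eq_dec n m) as [->|Hne]; [lia|]. specialize (Hg n m ltac:(lia)); lia.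
  - destruct (le_lt_dec n m) as [|Hlt]; [assumption|]. specialize (Hg _ _ Hlt); lia.
Qed.

(* Always jump to an index whose value is minimal among all later values. *)
Lemma wf_nondescending_subsequence {T : Type} (lt : T -> T -> Prop) (f : nat -> T) :
  well_founded lt ->
  exists g : nat -> nat, (forall i j, i < j -> g i < g j) /\
    (forall i j, i < j -> ~ lt (f (g j)) (f (g i))).
Proof.
  intros W.
  assert (Hmin : forall k, exists i, k <= i /\ forall j, k <= j -> ~ lt (f j) (f i)).
  { intro k.
    destruct (wf_has_minimal lt (fun s => exists i, k <= i /\ f i = s) W)
      as [s [[i [Hki <-]] Hs]].
    - exists (f k), k; split; [lia|reflexivity].
    - exists i; split; [exact Hki|]. intros j Hj. apply Hs. exists j; auto. }
  destruct (functional_choice _ Hmin) as [next Hnext].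
  pose (g := fun n => Nat.iter n (fun i => next (S i)) (next 0)).
  assert (Hg_min : forall n, exists k, k <= g n /\ forall j, k <= j -> ~ lt (f j) (f (g n))).
  { intros [|n]; [exists 0 | exists (S (g n))]; apply Hnext. }
  assert (Hg_step : forall n, g n < g (S n)) by (intro n; apply (Hnext (S (g n)))).
  assert (Hg_incr : forall i j, i < j -> g i < g j).
  { intros i j Hij. induction Hij; [apply Hg_step|]. specialize (Hg_step m). lia. }
  exists g; split; [exact Hg_incr|].
  intros i j Hij. destruct (Hg_min i) as [k [Hk Hk_min]]. apply Hk_min.
  specialize (Hg_incr _ _ Hij). lia.
Qed.

Lemma antitone_chain {T : Type} (P : nat -> T -> Prop) :
  (forall n, subset (P (S n)) (P n)) -> forall n m, n <= m -> subset (P m) (P n).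
Proof.
  intros HP n m Hnm; induction Hnm as [|m _ IH]; intros u Hu; [exact Hu|].
  apply IH, HP, Hu.
Qed.

Section Order.

Context {T : Type} (lt : T -> T -> Prop).
Hypothesis lt_order : strict_order lt.

Definition Somega2_pattern (a b : nat -> T) : Prop :=
  forall m n, lt (a m) (b n) <-> n <= m.

Definition Somega2_copy (a b : nat -> T) : Prop :=
  Somega2_pattern a b /\ (forall i j, ~ lt (a i) (a j)) /\
  (forall i j, ~ lt (b i) (b j)) /\ (forall i j, ~ lt (b i) (a j)).

Lemma embeds_Somega2_copy :
  embeds Somega2_lt lt <-> exists a b, Somega2_copy a b.
Proof.
  split.
  - intros [pi [_ Hpi]].
    exists (fun m => pi (inl m)), (fun n => pi (inr n)).
    split; [| split; [| split]]; intros i j;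
      [symmetry; apply (Hpi (inl i) (inr j)) | .. ]; intro H; apply Hpi in H; exact H.
  - intros (a & b & Hp & Naa & Nbb & Nba).
    assert (Hdiag : forall n, lt (a n) (b n)) by (intro n; apply Hp; lia).
    exists (fun x => match x with inl m => a m | inr n => b n end). split.
    + intros [m|n] [m'|n'] Heq; simpl in Heq.
      * pose proof (Hdiag m) as H1; pose proof (Hdiag m') as H2.
        rewrite Heq in H1; rewrite <- Heq in H2.
        apply Hp in H1; apply Hp in H2. f_equal; lia.
      * exfalso. pose proof (Hdiag n') as H. rewrite <- Heq in H. exact (Naa _ _ H).
      * exfalso. pose proof (Hdiag n) as H. rewrite Heq in H. exact (Naa _ _ H).
      * pose proof (Hdiag n) as H1; pose proof (Hdiag n') as H2.
        rewrite Heq in H1; rewrite <- Heq in H2.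
        apply Hp in H1; apply Hp in H2. f_equal; lia.
    + intros [m|n] [m'|n']; simpl.
      * split; [intros [] | apply Naa].
      * symmetry; apply Hp.
      * split; [intros [] | apply Nba].
      * split; [intros [] | apply Nbb].
Qed.

(* The pattern alone rules out [a i < a j] and [b i < b j] for [i < j], by
   transitivity through [b j], resp. [a i]; only backward descents remain. *)
Lemma Somega2_pattern_copy (a b : nat -> T) :
  Somega2_pattern a b ->
  (forall i j, i < j -> ~ lt (a j) (a i)) ->
  (forall i j, i < j -> ~ lt (b j) (b i)) ->
  Somega2_copy a b.
Proof.
  destruct lt_order as [Hirr Htr]. intros Hp Ha Hb.
  assert (Naa : forall i j, ~ lt (a i) (a j)).
  { intros i j H. destruct (lt_eq_lt_dec i j) as [[Hij| ->]|Hij].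
    - assert (H0 : lt (a i) (b j)) by (apply Htr with (a j); [exact H | apply Hp; lia]).
      apply Hp in H0; lia.
    - exact (Hirr _ H).
    - exact (Ha j i Hij H). }
  assert (Nbb : forall i j, ~ lt (b i) (b j)).
  { intros i j H. destruct (lt_eq_lt_dec i j) as [[Hij| ->]|Hij].
    - assert (H0 : lt (a i) (b j)) by (apply Htr with (b i); [apply Hp; lia | exact H]).
      apply Hp in H0; lia.
    - exact (Hirr _ H).
    - exact (Hb j i Hij H). }
  split; [exact Hp | split; [exact Naa | split; [exact Nbb |]]].
  intros i j H. apply (Nbb i j). apply Htr with (a j); [exact H | apply Hp; lia].
Qed.

Lemma Somega2_pattern_subsequence (a b : nat -> T) (g : nat -> nat) :
  (forall i j, i < j -> g i < g j) ->
  Somega2_pattern a b -> Somega2_pattern (fun n => a (g n)) (fun n => b (g n)).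
Proof.
  intros Hg Hp m n. rewrite (strictly_increasing_le_iff g Hg). apply Hp.
Qed.

Lemma wf_Somega2_pattern_embeds (a b : nat -> T) :
  well_founded lt -> Somega2_pattern a b -> embeds Somega2_lt lt.
Proof.
  intros W Hp.
  destruct (wf_nondescending_subsequence lt b W) as [g1 [Hg1 Hb]].
  destruct (wf_nondescending_subsequence lt (fun n => a (g1 n)) W) as [g2 [Hg2 Ha]].
  apply embeds_Somega2_copy.
  exists (fun n => a (g1 (g2 n))), (fun n => b (g1 (g2 n))).
  apply Somega2_pattern_copy.
  - apply (Somega2_pattern_subsequence (fun n => a (g1 n)) (fun n => b (g1 n)) g2 Hg2).
    exact (Somega2_pattern_subsequence a b g1 Hg1 Hp).
  - exact Ha.
  - intros i j Hij. apply Hb, Hg2, Hij.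
Qed.

Definition dset_chain (z : nat -> T) : Prop :=
  forall n, psubset (dset lt (z (S n))) (dset lt (z n)).

Definition cuset_chain (y : nat -> T) : Prop :=
  forall n, psubset (cuset lt (y (S n))) (cuset lt (y n)).

Lemma dset_chain_Somega2_pattern (z : nat -> T) :
  dset_chain z -> exists w, Somega2_pattern w z.
Proof.
  intros Hz.
  assert (Hwit : forall n, exists w, lt w (z n) /\ ~ lt w (z (S n))).
  { intro n. destruct (Hz n) as [_ Hn].
    destruct (not_all_ex_not _ _ Hn) as [w Hw]. exists w. exact (imply_to_and _ _ Hw). }
  destruct (functional_choice _ Hwit) as [w Hw].
  pose proof (antitone_chain (fun n => dset lt (z n)) (fun n => proj1 (Hz n))) as Hmono.
  exists w. intros m n; split; intro H.
  - destruct (le_lt_dec n m) as [|Hlt]; [assumption | exfalso].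
    apply (proj2 (Hw m)), (Hmono (S m) n Hlt), H.
  - apply (Hmono n m H), Hw.
Qed.

Lemma cuset_chain_Somega2_pattern (y : nat -> T) :
  cuset_chain y -> exists t, Somega2_pattern (fun m => y (S m)) t.
Proof.
  intros Hy.
  assert (Hwit : forall n, exists t, ~ lt (y n) t /\ lt (y (S n)) t).
  { intro n. destruct (Hy n) as [_ Hn].
    destruct (not_all_ex_not _ _ Hn) as [t Ht].
    destruct (imply_to_and _ _ Ht) as [H1 H2]. exists t. split; [exact H1 | exact (NNPP _ H2)]. }
  destruct (functional_choice _ Hwit) as [t Ht].
  pose proof (antitone_chain (fun n => cuset lt (y n)) (fun n => proj1 (Hy n))) as Hmono.
  assert (Huset : forall n m v, n <= m -> lt (y n) v -> lt (y m) v).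
  { intros n m v Hnm H. apply NNPP; intro Hn. exact (Hmono n m Hnm v Hn H). }
  exists t. intros m n; split; intro H.
  - destruct (le_lt_dec n m) as [|Hlt]; [assumption | exfalso].
    apply (proj1 (Ht n)), (Huset (S m) n (t n) Hlt), H.
  - apply (Huset (S n) (S m) (t n) ltac:(lia)), Ht.
Qed.

Lemma R22_embeds_of (p q r s : T) :
  lt p q -> lt r s ->
  ~ lt p s -> ~ lt r q -> ~ lt p r -> ~ lt r p -> ~ lt q s -> ~ lt s q ->
  ~ lt q r -> ~ lt s p ->
  embeds R22_lt lt.
Proof.
  destruct lt_order as [Hirr Htr].
  intros Hpq Hrs Hps Hrq Hpr Hrp Hqs Hsq Hqr Hsp.
  assert (Hqp : ~ lt q p) by (intro H; exact (Hirr _ (Htr _ _ _ Hpq H))).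
  assert (Hsr : ~ lt s r) by (intro H; exact (Hirr _ (Htr _ _ _ Hrs H))).
  exists (fun x => match x with x0 => p | y0 => q | x1 => r | y1 => s end).
  split.
  - intros [] [] H; simpl in H; try reflexivity; subst;
      exfalso; first [ eapply Hirr; eassumption | contradiction ].
  - intros [] []; unfold R22_lt; simpl; split; intro H;
      first [ assumption | contradiction | exfalso; eapply Hirr; eassumption
            | left; split; reflexivity | right; split; reflexivity
            | destruct H as [[H1 H2]|[H1 H2]]; discriminate ].
Qed.

Section R22Free.

Hypothesis R22_free : ~ embeds R22_lt lt.
Variables a b : nat -> T.
Hypothesis ab_copy : Somega2_copy a b.

(* Otherwise [a n < b n] and [u < b (S n)] would form a copy of R_{2,2}. *)
Lemma R22_free_dset_succ n u : lt u (b (S n)) -> lt u (b n).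
Proof.
  destruct lt_order as [_ Htr]. destruct ab_copy as (Hp & _ & Nbb & Nba).
  intro Hu. apply NNPP; intro Hn. apply R22_free.
  apply (R22_embeds_of (a n) (b n) u (b (S n))); try apply Nbb; try apply Nba.
  - apply Hp; lia.
  - exact Hu.
  - intro H; apply Hp in H; lia.
  - exact Hn.
  - intro H. pose proof (proj1 (Hp n (S n)) (Htr _ _ _ H Hu)); lia.
  - intro H. exact (Hn (Htr _ _ _ H (proj2 (Hp n n) (le_n n)))).
  - intro H. exact (Nbb _ _ (Htr _ _ _ H Hu)).
Qed.

(* Otherwise [a m < v] and [a (S m) < b (S m)] would form a copy of R_{2,2}. *)
Lemma R22_free_uset_succ m v : lt (a m) v -> lt (a (S m)) v.
Proof.
  destruct lt_order as [_ Htr]. destruct ab_copy as (Hp & Naa & _ & Nba).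
  intro Hv. apply NNPP; intro Hn. apply R22_free.
  apply (R22_embeds_of (a m) v (a (S m)) (b (S m))); try apply Naa; try apply Nba.
  - exact Hv.
  - apply Hp; lia.
  - intro H; apply Hp in H; lia.
  - exact Hn.
  - intro H. pose proof (proj1 (Hp m (S m)) (Htr _ _ _ Hv H)); lia.
  - intro H. exact (Hn (Htr _ _ _ (proj2 (Hp (S m) (S m)) (le_n _)) H)).
  - intro H. exact (Naa _ _ (Htr _ _ _ Hv H)).
Qed.

Lemma R22_free_dset_chain : dset_chain b.
Proof.
  destruct ab_copy as (Hp & _). intro n. split.
  - intros u. apply R22_free_dset_succ.
  - intro Hsub. specialize (Hsub (a n) (proj2 (Hp n n) (le_n n))).
    apply Hp in Hsub; lia.
Qed.

Lemma R22_free_cuset_chain : cuset_chain a.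
Proof.
  destruct ab_copy as (Hp & _). intro n. split.
  - intros v Hv H. apply Hv, R22_free_uset_succ, H.
  - intro Hsub. apply (Hsub (b (S n))).
    + intro H; apply Hp in H; lia.
    + apply Hp; lia.
Qed.

End R22Free.

Lemma embeds_Somega2_iff_dset_chain :
  well_founded lt -> ~ embeds R22_lt lt ->
  embeds Somega2_lt lt <-> exists z, dset_chain z.
Proof.
  intros W HR. split.
  - intros [a [b Hab]]%embeds_Somega2_copy. exists b. exact (R22_free_dset_chain HR a b Hab).
  - intros [z Hz]. destruct (dset_chain_Somega2_pattern z Hz) as [w Hw].
    exact (wf_Somega2_pattern_embeds w z W Hw).
Qed.

Lemma embeds_Somega2_iff_cuset_chain :
  well_founded lt -> ~ embeds R22_lt lt ->
  embeds Somega2_lt lt <-> exists y, cuset_chain y.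
Proof.
  intros W HR. split.
  - intros [a [b Hab]]%embeds_Somega2_copy. exists a. exact (R22_free_cuset_chain HR a b Hab).
  - intros [y Hy]. destruct (cuset_chain_Somega2_pattern y Hy) as [t Ht].
    exact (wf_Somega2_pattern_embeds _ t W Ht).
Qed.

End Order.

(* [DS_lt lt] and [CUS_lt lt] are this relation for [F := dset lt], resp. [cuset lt]. *)
Definition image_psubset {T : Type} (F : T -> T -> Prop)
    (A B : {A : T -> Prop | exists x, A = F x}) : Prop :=
  psubset (proj1_sig A) (proj1_sig B).

Lemma wf_image_psubset_iff {T : Type} (F : T -> T -> Prop) :
  well_founded (image_psubset F) <->
  ~ exists z : nat -> T, forall n, psubset (F (z (S n))) (F (z n)).
Proof.
  split.
  - intros W [z Hz].
    apply (descending_chain_not_wf _ (fun n => exist _ (F (z n)) (ex_intro _ (z n) eq_refl)) Hz W).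
  - intro Hn. apply NNPP; intro HW.
    destruct (not_wf_descending_chain _ HW) as [f Hf].
    destruct (functional_choice _ (fun n => proj2_sig (f n))) as [z Hz].
    apply Hn. exists z. intro n. specialize (Hf n). unfold image_psubset in Hf.
    rewrite !Hz in Hf. exact Hf.
Qed.

Lemma wf_DS_iff {T : Type} (lt : T -> T -> Prop) :
  well_founded (DS_lt lt) <-> ~ exists z, dset_chain lt z.
Proof. exact (wf_image_psubset_iff (dset lt)). Qed.

Lemma wf_CUS_iff {T : Type} (lt : T -> T -> Prop) :
  well_founded (CUS_lt lt) <-> ~ exists y, cuset_chain lt y.
Proof. exact (wf_image_psubset_iff (cuset lt)). Qed.

Theorem lemma2p6 (S : Type) (lt : S -> S -> Prop) :
  strict_order lt ->
  well_founded lt ->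
  ~ embeds R22_lt lt ->
  ((~ embeds Somega2_lt lt) <-> well_founded (DS_lt lt)) /\
  (well_founded (DS_lt lt) <-> well_founded (CUS_lt lt)).
Proof.
  intros Hord W HR.
  rewrite wf_DS_iff, wf_CUS_iff,
    <- (embeds_Somega2_iff_dset_chain lt Hord W HR),
    <- (embeds_Somega2_iff_cuset_chain lt Hord W HR).
  tauto.
Qed.
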